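(* Let $G$ be a finite simple graph and let $D$ be an open irredundant dominating set of $G$. Then for any finite simple graph $H$, the set $D \times V(H)$ is an open irredundant, minimal dominating set of the Cartesian product $G \,\square\, H$.
   Context: For $u\in A\subseteq V(G)$, the external private neighborhood of $u$ with respect to $A$ is $\mathrm{epn}[u,A]=N(u)-N[A-\{u\}]$, the set of vertices outside $A$ adjacent to $u$ and to no other vertex of $A$. A set $A$ is open irredundant if $\mathrm{epn}[u,A]\neq\emptyset$ for every $u\in A$. The Cartesian product $G\,\square\, H$ has vertex set $V(G)\times V(H)$, with $(g_1,h_1)$ adjacent to $(g_2,h_2)$ iff either ($g_1=g_2$ and $h_1h_2\in E(H)$) or ($h_1=h_2$ and $g_1g_2\in E(G)$). *)

(* A finite simple graph is a vertex finType T with an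
   adjacency relation e : rel T that is symmetric and irreflexive. *)
From mathcomp Require Import all_boot.
Set Implicit Arguments. Unset Strict Implicit. Unset Printing Implicit Defensive.

Section Graphs.
Variable T : finType.
Variable e : rel T.

Definition nbh (u : T) : {set T} := [set v | e u v].
Definition cnbh (u : T) : {set T} := u |: nbh u.
Definition cnbhS (A : {set T}) : {set T} := \bigcup_(a in A) cnbh a.
Definition epn (u : T) (A : {set T}) : {set T} := nbh u :\: cnbhS (A :\ u).
Definition open_irredundant (A : {set T}) : Prop :=
  forall u, u \in A -> epn u A != set0.
Definition dominating (A : {set T}) : Prop :=
  forall v : T, v \in A \/ exists2 u, u \in A & e u v.
Definition minimal_dominating (A : {set T}) : Prop :=
  dominating A /\ forall B : {set T}, B \proper A -> ~ dominating B.
End Graphs.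

Definition cart_rel (T1 T2 : finType) (eG : rel T1) (eH : rel T2) : rel (T1 * T2) :=
  fun x y => ((x.1 == y.1) && eH x.2 y.2) || ((x.2 == y.2) && eG x.1 y.1).

(* A vertex w is a private neighbour of u in A when w lies outside A and u is
   its only neighbour in A; open irredundance says that every vertex of A has
   one.  Hence a dominating open irredundant set is minimal: dropping u leaves
   its private neighbour undominated.  In G □ H, a private neighbour w of u
   with respect to D yields the private neighbour (w, h) of (u, h) with respect
   to D × V(H), and domination of G by D lifts fibrewise to G □ H. *)
From mathcomp Require Import all_boot.

Set Implicit Arguments.
Unset Strict Implicit.
Unset Printing Implicit Defensive.

Section PrivateNeighbours.
Variables (T : finType) (e : rel T).

Definition private_nbr (A : {set T}) (u w : T) : Prop :=
  [/\ e u w, w \notin A & {in A, forall x, e x w -> x = u}].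

Lemma mem_cnbhS (A : {set T}) (w : T) :
  (w \in cnbhS e A) = [exists x in A, (w == x) || e x w].
Proof.
apply/bigcupP/existsP => [[x xA]|[x /andP[xA]]].
  by rewrite !inE => wx; exists x; rewrite xA.
by exists x; rewrite // !inE.
Qed.

Hypothesis e_irr : irreflexive e.

Lemma epnP {A : {set T}} {u w : T} :
  reflect (private_nbr A u w) (w \in epn e u A).
Proof.
rewrite /epn in_setD mem_cnbhS inE negb_exists.
apply: (iffP andP) => [[/forallP notA euw]|[euw wNA privw]]; last first.
  split=> //; apply/forallP => x; rewrite !inE.
  apply/negP => /andP[/andP[xu xA] /orP[/eqP wx|exw]].
    by rewrite wx xA in wNA.
  by rewrite (privw x xA exw) eqxx in xu.
have far_from_Au x : x \in A -> x != u -> (w != x) && ~~ e x w.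
  by move=> xA xu; have := notA x; rewrite !inE xu xA negb_or.
split=> // [|x xA exw].
  apply/negP => wA; have [wu|wNu] := eqVneq w u.
    by rewrite wu e_irr in euw.
  by have := far_from_Au w wA wNu; rewrite eqxx.
by apply/eqP/negPn/negP => xu; have := far_from_Au x xA xu; rewrite exw andbF.
Qed.

Lemma open_irredundant_dominating_minimal (A : {set T}) :
  open_irredundant e A -> dominating e A -> minimal_dominating e A.
Proof.
move=> oirA domA; split=> // B /properP[/subsetP BA [u uA uNB]] domB.
have /set0Pn[w /epnP[_ wNA privw]] := oirA u uA.
case: (domB w) => [/BA wA|[x xB exw]]; first by rewrite wA in wNA.
by rewrite -(privw x (BA x xB) exw) xB in uNB.
Qed.

End PrivateNeighbours.

Section CartesianProduct.
Variables (TG TH : finType) (eG : rel TG) (eH : rel TH).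

Lemma cart_rel_irr : irreflexive eG -> irreflexive eH ->
  irreflexive (cart_rel eG eH).
Proof. by move=> eG_irr eH_irr [g h]; rewrite /cart_rel /= eG_irr eH_irr !andbF. Qed.

Lemma private_nbr_setXT (D : {set TG}) (u w : TG) (h : TH) :
  private_nbr eG D u w ->
  private_nbr (cart_rel eG eH) (setX D [set: TH]) (u, h) (w, h).
Proof.
move=> [euw wND privw]; split.
- by rewrite /cart_rel /= eqxx euw orbT.
- by rewrite !inE andbT.
move=> [x y]; rewrite !inE andbT /cart_rel /= => xD.
case/orP=> /andP[/eqP xw exw]; first by rewrite -xw xD in wND.
by rewrite (privw x xD exw) xw.
Qed.

Lemma open_irredundant_setXT (D : {set TG}) :
  irreflexive eG -> irreflexive eH -> open_irredundant eG D ->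
  open_irredundant (cart_rel eG eH) (setX D [set: TH]).
Proof.
move=> eG_irr eH_irr oirD [u h]; rewrite !inE andbT => uD.
have /set0Pn[w /(epnP eG_irr) privw] := oirD u uD.
apply/set0Pn; exists (w, h).
exact/(epnP (cart_rel_irr eG_irr eH_irr))/private_nbr_setXT.
Qed.

Lemma dominating_setXT (D : {set TG}) :
  dominating eG D -> dominating (cart_rel eG eH) (setX D [set: TH]).
Proof.
move=> domD [v h]; case: (domD v) => [vD|[u uD euv]].
  by left; rewrite !inE vD.
by right; exists (u, h); rewrite ?inE ?uD // /cart_rel /= eqxx euv orbT.
Qed.

End CartesianProduct.

Theorem lemma14 (TG : finType) (eG : rel TG)
  (eG_sym : symmetric eG) (eG_irr : irreflexive eG)
  (D : {set TG}) (hD_oir : open_irredundant eG D) (hD_dom : dominating eG D)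
  (TH : finType) (eH : rel TH) (eH_sym : symmetric eH) (eH_irr : irreflexive eH) :
  open_irredundant (cart_rel eG eH) (setX D [set: TH]) /\
  minimal_dominating (cart_rel eG eH) (setX D [set: TH]).
Proof.
have oirDH := open_irredundant_setXT eG_irr eH_irr hD_oir.
split=> //; apply: open_irredundant_dominating_minimal oirDH _.
- exact: cart_rel_irr.
- exact: dominating_setXT.
Qed.
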